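(* Let $(X,d)$ be a nonempty metric space, let $p:[0,1]\to X$ be a rectifiable path with range $Y=p([0,1])$, and let $F:X\rightarrow K(X)$ and $\beta\in[0,1]$ be such that $s_Y(F(x))<\beta$ for all $x\in Y$. Then $l(F\circ p)\le\beta\, l(p)<\infty$, where $l(F\circ p):=\sup_{\pi\in\Pi}\sum_{i=1}^n H(F(p(t_{i-1})),F(p(t_i)))$.
   Context: $\Pi$ is the set of finite partitions $0=t_0<\cdots<t_n=1$ of $[0,1]$; $l(p)=\sup_{\pi\in\Pi}\sum_i d(p(t_{i-1}),p(t_i))$, and $p$ is rectifiable if $p$ is continuous and $l(p)<\infty$. $K(X)$ is the set of nonempty compact subsets of $X$; $H$ is the Hausdorff distance. For $x\in Y$, $s_Y(F(x)):=\limsup_{y\to x,\ y\in Y\setminus\{x\}}\frac{H(F(x),F(y))}{d(x,y)}$ if $x$ is a limit point of $Y$, and $s_Y(F(x))=0$ otherwise. *)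

From Stdlib Require Import Reals List Classical ClassicalEpsilon.
From Coquelicot Require Import Coquelicot.
Open Scope R_scope.

Section MetricDefs.
Variable X : Type.
Variable d : X -> X -> R.

Record is_metric : Prop := {
  metric_sep : forall x y, d x y = 0 <-> x = y;
  metric_sym : forall x y, d x y = d y x;
  metric_tri : forall x y z, d x z <= d x y + d y z }.

Definition open_set (U : X -> Prop) : Prop :=
  forall x, U x -> exists e, 0 < e /\ forall y, d x y < e -> U y.

Definition compact_set (A : X -> Prop) : Prop :=
  forall (I : Type) (U : I -> X -> Prop),
    (forall i, open_set (U i)) -> (forall a, A a -> exists i, U i a) ->
    exists l : list I, forall a, A a -> exists i, In i l /\ U i a.

Definition in_KX (A : X -> Prop) : Prop := (exists a, A a) /\ compact_set A.

Definition dist_pt_set (a : X) (B : X -> Prop) : R :=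
  real (Glb_Rbar (fun r => exists b, B b /\ r = d a b)).

(* Hausdorff distance (finite on K(X)) *)
Definition hausdorff (A B : X -> Prop) : R :=
  Rmax (real (Lub_Rbar (fun r => exists a, A a /\ r = dist_pt_set a B)))
       (real (Lub_Rbar (fun r => exists b, B b /\ r = dist_pt_set b A))).

Definition is_limit_point (Y : X -> Prop) (x : X) : Prop :=
  forall delta, 0 < delta -> exists y, Y y /\ y <> x /\ d x y < delta.

(* limsup_{y -> x, y in Y \ {x}} H(F x, F y)/d(x,y)
   = inf_{delta>0} sup_{y in Y, y<>x, d(x,y)<delta} ..., computed in Rbar as the
   infimum of all reals s bounding some such sup from above. *)
Definition local_sup (F : X -> X -> Prop) (Y : X -> Prop) (x : X) (delta : R) : Rbar :=
  Lub_Rbar (fun r => exists y, Y y /\ y <> x /\ d x y < delta /\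
                               r = hausdorff (F x) (F y) / d x y).

Definition local_lip (F : X -> X -> Prop) (Y : X -> Prop) (x : X) : Rbar :=
  Glb_Rbar (fun s => exists delta, 0 < delta /\
                       Rbar_le (local_sup F Y x delta) (Finite s)).

Definition s_Y (F : X -> X -> Prop) (Y : X -> Prop) (x : X) : Rbar :=
  if excluded_middle_informative (is_limit_point Y x) then local_lip F Y x
  else Finite 0.

(* sum_{i=1}^n g(i-1) = sum_{i<n} g i *)
Fixpoint psum (g : nat -> R) (n : nat) : R :=
  match n with O => 0 | S k => psum g k + g k end.

Definition is_partition (n : nat) (t : nat -> R) : Prop :=
  t O = 0 /\ t n = 1 /\ forall i, (i < n)%nat -> t i < t (S i).

Definition variation {Z : Type} (D : Z -> Z -> R) (q : R -> Z) : Rbar :=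
  Lub_Rbar (fun s => exists (n : nat) (t : nat -> R), is_partition n t /\
                       s = psum (fun i => D (q (t i)) (q (t (S i)))) n).

Definition path_length (p : R -> X) : Rbar := variation d p.

Definition continuous_on01 (p : R -> X) : Prop :=
  forall t, 0 <= t <= 1 -> forall e, 0 < e -> exists delta, 0 < delta /\
    forall s, 0 <= s <= 1 -> Rabs (s - t) < delta -> d (p t) (p s) < e.

Definition rectifiable (p : R -> X) : Prop :=
  continuous_on01 p /\ Rbar_lt (path_length p) p_infty.

Definition set_path_length (F : X -> X -> Prop) (p : R -> X) : Rbar :=
  variation hausdorff (fun t => F (p t)).
End MetricDefs.

From Stdlib Require Import Reals Lra Lia List Classical ClassicalEpsilon.
From Coquelicot Require Import Coquelicot.
Open Scope R_scope.

(* The values F(x) are compact, so the Hausdorff distance behaves like a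
   pseudometric on them.  Near every parameter c, continuity of p and
   s_Y(F(p c)) < beta give H(F(p c), F(p s)) <= beta d(p c, p s).  A
   continuous-induction argument (take the supremum of the points reachable
   so far) turns this local bound into a global one: every partition sum of
   F o p is dominated by beta times the d-sum of p along some other partition,
   hence by beta l(p). *)

Lemma real_Lub_Rbar_correct (E : R -> Prop) (e0 M : R) :
  E e0 -> (forall e, E e -> e <= M) -> is_lub E (real (Lub_Rbar E)).
Proof.
  intros He0 HM.
  destruct (Lub_Rbar_correct E) as [Hub Hleast].
  assert (Hle : Rbar_le (Lub_Rbar E) M) by (apply Hleast; exact HM).
  assert (Hge : Rbar_le e0 (Lub_Rbar E)) by (apply Hub, He0).
  destruct (Lub_Rbar E) as [l| |]; simpl in *; try contradiction.
  split.
  - exact Hub.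
  - intros m Hm. exact (Hleast (Finite m) Hm).
Qed.

Lemma real_Glb_Rbar_correct (E : R -> Prop) (e0 M : R) :
  E e0 -> (forall e, E e -> M <= e) ->
  (forall e, E e -> real (Glb_Rbar E) <= e) /\
  (forall m, (forall e, E e -> m <= e) -> m <= real (Glb_Rbar E)).
Proof.
  intros He0 HM.
  destruct (Glb_Rbar_correct E) as [Hlb Hgreatest].
  assert (Hle : Rbar_le M (Glb_Rbar E)) by (apply Hgreatest; exact HM).
  assert (Hge : Rbar_le (Glb_Rbar E) e0) by (apply Hlb, He0).
  destruct (Glb_Rbar E) as [l| |]; simpl in *; try contradiction.
  split.
  - exact Hlb.
  - intros m Hm. exact (Hgreatest (Finite m) Hm).
Qed.

Lemma Glb_Rbar_lt (E : R -> Prop) (b : R) :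
  Rbar_lt (Glb_Rbar E) (Finite b) -> exists s, E s /\ s < b.
Proof.
  intros Hlt. apply NNPP. intros Hno.
  apply (Rbar_lt_not_le _ _ Hlt), (proj2 (Glb_Rbar_correct E)).
  intros s Hs. apply Rnot_lt_le. intros Hsb. apply Hno. exists s. auto.
Qed.

Lemma variation_le {Z : Type} (D : Z -> Z -> R) (q : R -> Z) (M : R) :
  (forall n t, is_partition n t -> psum (fun i => D (q (t i)) (q (t (S i)))) n <= M) ->
  Rbar_le (variation D q) (Finite M).
Proof.
  intros HM. apply (proj2 (Lub_Rbar_correct _)).
  intros s [n [t [Ht ->]]]. exact (HM n t Ht).
Qed.

Lemma variation_finite {Z : Type} (D : Z -> Z -> R) (q : R -> Z) :
  Rbar_lt (variation D q) p_infty ->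
  exists L, variation D q = Finite L /\
    forall n t, is_partition n t -> psum (fun i => D (q (t i)) (q (t (S i)))) n <= L.
Proof.
  unfold variation. intros Hfin.
  destruct (Lub_Rbar_correct (fun s => exists n t, is_partition n t /\
              s = psum (fun i => D (q (t i)) (q (t (S i)))) n)) as [Hub _].
  assert (Htrivial : Rbar_le (psum (fun i => D (q (INR i)) (q (INR (S i)))) 1)
                             (Lub_Rbar (fun s => exists n t, is_partition n t /\
                                s = psum (fun i => D (q (t i)) (q (t (S i)))) n))).
  { apply Hub. exists 1%nat, INR. split; [|reflexivity].
    split; [reflexivity|split; [reflexivity|]].
    intros i Hi. apply lt_INR. lia. }
  destruct (Lub_Rbar _) as [L| |]; simpl in Hfin, Htrivial; try contradiction.
  exists L. split; [reflexivity|].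
  intros n t Ht. exact (Hub _ (ex_intro _ n (ex_intro _ t (conj Ht eq_refl)))).
Qed.

Section Hausdorff.

Variables (X : Type) (d : X -> X -> R).
Hypothesis Hd : is_metric X d.

Lemma dist_refl x : d x x = 0.
Proof. apply (metric_sep X d Hd). reflexivity. Qed.

Lemma dist_nonneg x y : 0 <= d x y.
Proof.
  pose proof (metric_tri X d Hd x y x). rewrite (metric_sym X d Hd y x), dist_refl in H. lra.
Qed.

Definition nonempty_bounded (A : X -> Prop) : Prop :=
  (exists a, A a) /\ exists x0 M, forall a, A a -> d x0 a <= M.

Lemma compact_nonempty_bounded A : in_KX X d A -> nonempty_bounded A.
Proof.
  intros [[a0 Ha0] Hcomp]. split; [exists a0; exact Ha0|].
  destruct (Hcomp nat (fun n y => d a0 y < INR n)) as [l Hl].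
  - intros n y Hy. exists (INR n - d a0 y). split; [lra|].
    intros z Hz. pose proof (metric_tri X d Hd a0 y z). lra.
  - intros a _. destruct (INR_unbounded (d a0 a)) as [n Hn]. exists n. lra.
  - exists a0, (INR (list_max l)). intros a Ha.
    destruct (Hl a Ha) as [n [Hin Hlt]].
    assert (Hn : (n <= list_max l)%nat)
      by exact (proj1 (Forall_forall _ _) (proj1 (list_max_le l _) (le_n _)) n Hin).
    apply le_INR in Hn. lra.
Qed.

Lemma dist_pt_set_le B a b : B b -> dist_pt_set X d a B <= d a b.
Proof.
  intros Hb. unfold dist_pt_set.
  apply (real_Glb_Rbar_correct _ (d a b) 0).
  - exists b. auto.
  - intros e [b' [_ ->]]. apply dist_nonneg.
  - exists b. auto.
Qed.

Lemma dist_pt_set_glb B a m :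
  (exists b, B b) -> (forall b, B b -> m <= d a b) -> m <= dist_pt_set X d a B.
Proof.
  intros [b0 Hb0] Hm. unfold dist_pt_set.
  apply (real_Glb_Rbar_correct _ (d a b0) 0).
  - exists b0. auto.
  - intros e [b [_ ->]]. apply dist_nonneg.
  - intros e [b [Hb ->]]. exact (Hm b Hb).
Qed.

Definition excess (A B : X -> Prop) : R :=
  real (Lub_Rbar (fun r => exists a, A a /\ r = dist_pt_set X d a B)).

Lemma hausdorff_excess A B : hausdorff X d A B = Rmax (excess A B) (excess B A).
Proof. reflexivity. Qed.

Lemma excess_correct A B : nonempty_bounded A -> (exists b, B b) ->
  is_lub (fun r => exists a, A a /\ r = dist_pt_set X d a B) (excess A B).
Proof.
  intros [[a0 Ha0] [x0 [M HM]]] [b0 Hb0].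
  apply (real_Lub_Rbar_correct _ (dist_pt_set X d a0 B) (M + d x0 b0)).
  - exists a0. auto.
  - intros e [a [Ha ->]].
    pose proof (dist_pt_set_le B a b0 Hb0). pose proof (HM a Ha).
    pose proof (metric_tri X d Hd a x0 b0). rewrite (metric_sym X d Hd a x0) in *. lra.
Qed.

Lemma excess_ge A B a : nonempty_bounded A -> (exists b, B b) -> A a ->
  dist_pt_set X d a B <= excess A B.
Proof. intros HA HB Ha. apply (excess_correct A B HA HB). exists a. auto. Qed.

Lemma excess_le A B m : nonempty_bounded A -> (exists b, B b) ->
  (forall a, A a -> dist_pt_set X d a B <= m) -> excess A B <= m.
Proof.
  intros HA HB Hm. apply (excess_correct A B HA HB).
  intros e [a [Ha ->]]. exact (Hm a Ha).
Qed.

Lemma excess_diag A : nonempty_bounded A -> excess A A <= 0.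
Proof.
  intros HA. apply excess_le; [exact HA|exact (proj1 HA)|].
  intros a Ha. rewrite <- (dist_refl a). apply dist_pt_set_le, Ha.
Qed.

Lemma excess_triangle A B C : nonempty_bounded A -> nonempty_bounded B -> (exists c, C c) ->
  excess A C <= excess A B + excess B C.
Proof.
  intros HA HB HC. apply excess_le; [exact HA|exact HC|].
  intros a Ha.
  assert (Hvia : dist_pt_set X d a C - excess B C <= dist_pt_set X d a B).
  { apply dist_pt_set_glb; [exact (proj1 HB)|]. intros b Hb.
    assert (Htri : dist_pt_set X d a C - d a b <= dist_pt_set X d b C).
    { apply dist_pt_set_glb; [exact HC|]. intros c Hc.
      pose proof (dist_pt_set_le C a c Hc). pose proof (metric_tri X d Hd a b c). lra. }
    pose proof (excess_ge B C b HB HC Hb). lra. }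
  pose proof (excess_ge A B a HA (proj1 HB) Ha). lra.
Qed.

Lemma hausdorff_sym A B : hausdorff X d A B = hausdorff X d B A.
Proof. apply Rmax_comm. Qed.

Lemma hausdorff_diag A : nonempty_bounded A -> hausdorff X d A A <= 0.
Proof. intros HA. rewrite hausdorff_excess, Rmax_left; [apply excess_diag, HA|lra]. Qed.

Lemma hausdorff_triangle A B C :
  nonempty_bounded A -> nonempty_bounded B -> nonempty_bounded C ->
  hausdorff X d A C <= hausdorff X d A B + hausdorff X d B C.
Proof.
  intros HA HB HC. rewrite !hausdorff_excess.
  pose proof (excess_triangle A B C HA HB (proj1 HC)).
  pose proof (excess_triangle C B A HC HB (proj1 HA)).
  pose proof (Rmax_l (excess A B) (excess B A)). pose proof (Rmax_r (excess A B) (excess B A)).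
  pose proof (Rmax_l (excess B C) (excess C B)). pose proof (Rmax_r (excess B C) (excess C B)).
  apply Rmax_lub; lra.
Qed.

Lemma local_sup_le_bound (F : X -> X -> Prop) (Y : X -> Prop) x delta s y :
  Rbar_le (local_sup X d F Y x delta) (Finite s) -> Y y -> y <> x -> d x y < delta ->
  hausdorff X d (F x) (F y) <= s * d x y.
Proof.
  intros Hsup Hy Hyx Hxy.
  assert (Hratio : hausdorff X d (F x) (F y) / d x y <= s).
  { apply (Rbar_le_trans (Finite _) (local_sup X d F Y x delta) (Finite s)); [|exact Hsup].
    apply (proj1 (Lub_Rbar_correct _)). exists y. auto. }
  assert (Hpos : 0 < d x y).
  { destruct (Rle_lt_or_eq_dec 0 (d x y) (dist_nonneg x y)) as [Hlt|Heq]; [exact Hlt|].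
    exfalso. apply Hyx. symmetry. apply (metric_sep X d Hd). auto. }
  apply Rle_div_l in Hratio; lra.
Qed.

Lemma not_limit_point_isolated (Y : X -> Prop) x : ~ is_limit_point X d Y x ->
  exists delta, 0 < delta /\ forall y, Y y -> d x y < delta -> y = x.
Proof.
  intros Hnot. apply not_all_ex_not in Hnot as [delta Hdelta].
  apply imply_to_and in Hdelta as [Hpos Hno].
  exists delta. split; [exact Hpos|]. intros y Hy Hxy.
  apply NNPP. intros Hyx. apply Hno. exists y. auto.
Qed.

Lemma s_Y_lt_locally_lipschitz (F : X -> X -> Prop) (Y : X -> Prop) x beta :
  nonempty_bounded (F x) -> Rbar_lt (s_Y X d F Y x) (Finite beta) ->
  exists delta, 0 < delta /\ forall y, Y y -> d x y < delta ->
    hausdorff X d (F x) (F y) <= beta * d x y.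
Proof.
  intros HFx Hs.
  enough (Hpunct : exists delta, 0 < delta /\ forall y, Y y -> y <> x -> d x y < delta ->
                     hausdorff X d (F x) (F y) <= beta * d x y).
  { destruct Hpunct as [delta [Hpos Hbound]]. exists delta. split; [exact Hpos|].
    intros y Hy Hxy. destruct (classic (y = x)) as [->|Hyx]; [|auto].
    rewrite dist_refl, Rmult_0_r. apply hausdorff_diag, HFx. }
  unfold s_Y in Hs.
  destruct (excluded_middle_informative (is_limit_point X d Y x)) as [_|Hiso].
  - destruct (Glb_Rbar_lt _ _ Hs) as [s [[delta [Hpos Hsup]] Hsb]].
    exists delta. split; [exact Hpos|]. intros y Hy Hyx Hxy.
    pose proof (local_sup_le_bound F Y x delta s y Hsup Hy Hyx Hxy).
    pose proof (dist_nonneg x y).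
    assert (s * d x y <= beta * d x y) by (apply Rmult_le_compat_r; lra). lra.
  - destruct (not_limit_point_isolated Y x Hiso) as [delta [Hpos Hnear]].
    exists delta. split; [exact Hpos|]. intros y Hy Hyx Hxy. now exfalso; apply Hyx, Hnear.
Qed.

Lemma image_locally_lipschitz (p : R -> X) (F : X -> X -> Prop) (Y : X -> Prop) beta :
  continuous_on01 X d p -> (forall x, nonempty_bounded (F x)) ->
  (forall t, 0 <= t <= 1 -> Y (p t)) ->
  (forall t, 0 <= t <= 1 -> Rbar_lt (s_Y X d F Y (p t)) (Finite beta)) ->
  forall c, 0 <= c <= 1 -> exists eta, 0 < eta /\ forall s, 0 <= s <= 1 ->
    Rabs (s - c) < eta -> hausdorff X d (F (p c)) (F (p s)) <= beta * d (p c) (p s).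
Proof.
  intros Hcont HF HY Hs c Hc.
  destruct (s_Y_lt_locally_lipschitz F Y (p c) beta (HF (p c)) (Hs c Hc))
    as [delta [Hdelta Hnear]].
  destruct (Hcont c Hc delta Hdelta) as [eta [Heta Hclose]].
  exists eta. split; [exact Heta|]. intros s Hs01 Hsc.
  apply Hnear; [apply HY, Hs01|apply Hclose; assumption].
Qed.

End Hausdorff.

Definition is_chain (a b : R) (n : nat) (t : nat -> R) : Prop :=
  t O = a /\ t n = b /\ forall i, (i < n)%nat -> t i < t (S i).

Definition chain_dominates (D : R -> R -> R) (a b h : R) : Prop :=
  exists n t, is_chain a b n t /\ h <= psum (fun i => D (t i) (t (S i))) n.

Lemma psum_ext g g' n : (forall i, (i < n)%nat -> g i = g' i) -> psum g n = psum g' n.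
Proof.
  induction n as [|n IH]; intros Heq; simpl; [reflexivity|].
  rewrite IH by (intros i Hi; apply Heq; lia). rewrite Heq by lia. reflexivity.
Qed.

Lemma psum_scal c g n : psum (fun i => c * g i) n = c * psum g n.
Proof. induction n as [|n IH]; simpl; [ring|rewrite IH; ring]. Qed.

Lemma chain_points_between a b n t : is_chain a b n t ->
  forall k, (k <= n)%nat -> a <= t k <= b.
Proof.
  intros [H0 [Hn Hincr]].
  assert (Hmono : forall k j, (k + j <= n)%nat -> t k <= t (k + j)%nat).
  { intros k j. induction j as [|j IH]; intros Hj; [rewrite Nat.add_0_r; lra|].
    rewrite Nat.add_succ_r. pose proof (Hincr (k + j)%nat ltac:(lia)).
    pose proof (IH ltac:(lia)). lra. }
  intros k Hk. split.
  - rewrite <- H0. exact (Hmono 0%nat k Hk).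
  - rewrite <- Hn. pose proof (Hmono k (n - k)%nat ltac:(lia)) as Hkn.
    replace (k + (n - k))%nat with n in Hkn by lia. exact Hkn.
Qed.

Lemma chain_dominates_weaken D a b h h' :
  chain_dominates D a b h -> h' <= h -> chain_dominates D a b h'.
Proof. intros [n [t [Ht Hh]]] Hh'. exists n, t. split; [exact Ht|lra]. Qed.

Lemma chain_dominates_refl D a h : h <= 0 -> chain_dominates D a a h.
Proof.
  intros Hh. exists O, (fun _ => a). split; [|simpl; lra].
  split; [reflexivity|split; [reflexivity|intros i Hi; lia]].
Qed.

Lemma chain_dominates_snoc D a b c h :
  chain_dominates D a b h -> b < c -> chain_dominates D a c (h + D b c).
Proof.
  intros [n [t [[H0 [Hn Hincr]] Hh]]] Hbc.
  exists (S n), (fun i => if (i <=? n)%nat then t i else c).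
  assert (Hlast : (S n <=? n)%nat = false) by (apply Nat.leb_gt; lia).
  split; [split; [|split]|]; cbv beta.
  - exact H0.
  - rewrite Hlast. reflexivity.
  - intros i Hi. destruct (Nat.leb_spec (S i) n) as [HSi|HSi].
    + rewrite (proj2 (Nat.leb_le i n)) by lia. apply Hincr. lia.
    + replace i with n by lia. rewrite Nat.leb_refl, Hn. exact Hbc.
  - cbn [psum]. rewrite Hlast, Nat.leb_refl, Hn.
    rewrite (psum_ext _ (fun i => D (t i) (t (S i)))); [lra|].
    intros i Hi. rewrite !(proj2 (Nat.leb_le _ n)) by lia. reflexivity.
Qed.

Section ContinuousInduction.

Variables K D : R -> R -> R.
Hypothesis K_sym : forall s s', K s s' = K s' s.
Hypothesis D_sym : forall s s', D s s' = D s' s.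
Hypothesis K_triangle : forall r s u, K r u <= K r s + K s u.
Hypothesis K_diag : forall s, K s s <= 0.
Hypothesis K_locally_le_D : forall c, 0 <= c <= 1 -> exists eta, 0 < eta /\
  forall s, 0 <= s <= 1 -> Rabs (s - c) < eta -> K c s <= D c s.

Lemma chain_dominates_extend o a c c' h :
  chain_dominates D o c (h + K a c) -> c < c' -> K c c' <= D c c' ->
  chain_dominates D o c' (h + K a c').
Proof.
  intros Hc Hcc' HK.
  apply (chain_dominates_weaken _ _ _ (h + K a c + D c c')).
  - apply chain_dominates_snoc; assumption.
  - pose proof (K_triangle a c c'). lra.
Qed.

Lemma chain_dominates_step o a b h : 0 <= a -> a <= b -> b <= 1 ->
  chain_dominates D o a h -> chain_dominates D o b (h + K a b).
Proof.
  intros Ha Hab Hb Hstart.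
  set (T := fun c => a <= c <= b /\ chain_dominates D o c (h + K a c)).
  assert (Ta : T a).
  { split; [lra|]. apply (chain_dominates_weaken _ _ _ h _ Hstart). pose proof (K_diag a). lra. }
  destruct (completeness T) as [m [Hub Hleast]].
  { exists b. intros c [Hc _]. lra. }
  { exists a. exact Ta. }
  assert (Ham : a <= m) by (apply Hub, Ta).
  assert (Hmb : m <= b) by (apply Hleast; intros c [Hc _]; lra).
  destruct (K_locally_le_D m) as [eta [Heta Hnear]]; [lra|].
  assert (Tm : T m).
  { assert (Hclose : exists c, T c /\ m - eta < c).
    { apply NNPP. intros Hno.
      assert (m <= m - eta) by
        (apply Hleast; intros c Tc; apply Rnot_lt_le; intros Hc; apply Hno; exists c; auto).
      lra. }
    destruct Hclose as [c [Tc Hc]]. pose proof (proj1 Tc) as Hcab.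
    destruct (Rle_lt_or_eq_dec c m (Hub c Tc)) as [Hcm|Heq]; [|rewrite <- Heq; exact Tc].
    split; [lra|].
    apply (chain_dominates_extend _ _ c); [exact (proj2 Tc)|exact Hcm|].
    rewrite K_sym, D_sym. apply Hnear; [lra|]. rewrite Rabs_left1; lra. }
  destruct (Rle_lt_or_eq_dec m b Hmb) as [Hlt|Heq]; [exfalso|rewrite <- Heq; exact (proj2 Tm)].
  set (m' := Rmin b (m + eta / 2)).
  assert (Hm'b : m' <= b) by apply Rmin_l.
  assert (Hm'eta : m' <= m + eta / 2) by apply Rmin_r.
  assert (Hmm' : m < m') by (apply Rmin_glb_lt; lra).
  assert (Tm' : T m').
  { split; [lra|]. apply (chain_dominates_extend _ _ m); [exact (proj2 Tm)|exact Hmm'|].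
    apply Hnear; [lra|]. rewrite Rabs_right; lra. }
  pose proof (Hub m' Tm'). lra.
Qed.

Lemma partition_sum_dominated n t : is_partition n t ->
  chain_dominates D 0 1 (psum (fun i => K (t i) (t (S i))) n).
Proof.
  intros Ht.
  pose proof (chain_points_between 0 1 n t Ht) as Hbetween.
  destruct Ht as [H0 [Hn Hincr]].
  assert (Hprefix : forall k, (k <= n)%nat ->
            chain_dominates D 0 (t k) (psum (fun i => K (t i) (t (S i))) k)).
  { induction k as [|k IH]; intros Hk; simpl.
    - rewrite H0. apply chain_dominates_refl. lra.
    - pose proof (Hbetween k ltac:(lia)). pose proof (Hbetween (S k) Hk).
      pose proof (Hincr k ltac:(lia)).
      apply chain_dominates_step; try lra. apply IH. lia. }
  rewrite <- Hn. apply Hprefix. lia.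
Qed.

End ContinuousInduction.

Theorem lemma16 (X : Type) (d : X -> X -> R) (Hd : is_metric X d)
  (Hne : inhabited X) (p : R -> X) (Hp : rectifiable X d p)
  (F : X -> X -> Prop) (HF : forall x, in_KX X d (F x))
  (beta : R) (Hbeta : 0 <= beta <= 1) :
  let Y := fun y => exists t, 0 <= t <= 1 /\ p t = y in
  (forall x, Y x -> Rbar_lt (s_Y X d F Y x) (Finite beta)) ->
  Rbar_le (set_path_length X d F p) (Rbar_mult (Finite beta) (path_length X d p))
  /\ Rbar_lt (Rbar_mult (Finite beta) (path_length X d p)) p_infty.
Proof.
  intros Y HY.
  destruct Hp as [Hcont Hlen].
  assert (HFb : forall x, nonempty_bounded X d (F x))
    by (intros x; apply (compact_nonempty_bounded X d Hd), HF).
  destruct (variation_finite d p Hlen) as [L [HL HLbound]].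
  unfold path_length. rewrite HL. split; [|exact I].
  apply variation_le. intros n t Ht.
  destruct (partition_sum_dominated
              (fun s s' => hausdorff X d (F (p s)) (F (p s')))
              (fun s s' => beta * d (p s) (p s'))) with (n := n) (t := t)
    as [n' [t' [Ht' Hdom]]].
  - intros s s'. apply hausdorff_sym.
  - intros s s'. rewrite (metric_sym X d Hd). reflexivity.
  - intros r s u. apply (hausdorff_triangle X d Hd); apply HFb.
  - intros s. apply (hausdorff_diag X d Hd), HFb.
  - apply (image_locally_lipschitz X d Hd p F Y beta Hcont HFb).
    + intros s Hs. exists s. auto.
    + intros s Hs. apply HY. exists s. auto.
  - exact Ht.
  - rewrite psum_scal in Hdom. apply (Rle_trans _ _ _ Hdom), Rmult_le_compat_l; [lra|].
    exact (HLbound n' t' Ht').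
Qed.
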